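(* Let $\sigma:[0,\infty)\to[0,\infty)$ be nondecreasing with $\lim_{t\to\infty}\sigma(t)=\infty$. Assume that $\sigma^{\iota}\sim((\sigma^{\iota})_{\star})^{\star}$ on $(0,\infty)$. Then $\gamma(\sigma)+1=\gamma((\sigma^{\iota})_{\star})$.
   Context: $\sigma^{\iota}(t):=\sigma(1/t)$ for $t>0$ (nonincreasing, tending to $\infty$ as $t\to0$). For $h:(0,\infty)\to[0,\infty)$ nonincreasing with $\lim_{t\to0}h(t)=\infty$, its lower Legendre conjugate is $h_{\star}(t):=\inf_{s>0}\{h(s)+ts\}$, $t\ge0$ (nondecreasing, concave, tending to $\infty$). For a nondecreasing $g$, its upper Legendre conjugate is $g^{\star}(s):=\sup_{t\ge0}\{g(t)-st\}$, $s>0$; $((\sigma^{\iota})_{\star})^{\star}$ is the largest convex minorant of $\sigma^{\iota}$. $f\sim g$ on an interval $I$ means there is $C\ge1$ with $C^{-1}g-C\le f\le Cg+C$ on $I$. For a nondecreasing function $\sigma$ tending to $\infty$ and $\gamma>0$, $(P_{\sigma,\gamma})$ holds if there is $K>1$ with $\limsup_{t\to\infty}\sigma(K^{\gamma}t)/\sigma(t)<K$; $\gamma(\sigma):=\sup\{\gamma>0:(P_{\sigma,\gamma})\text{ holds}\}$, and $:=0$ if none holds. *)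

From HB Require Import structures.
From mathcomp Require Import all_boot all_order all_algebra.
From mathcomp Require Import all_classical all_reals all_analysis.
Set Implicit Arguments. Unset Strict Implicit. Unset Printing Implicit Defensive.
Import Order.TTheory GRing.Theory Num.Theory.
Import numFieldNormedType.Exports.
Local Open Scope classical_set_scope.
Local Open Scope ring_scope.

Section Defs.
Variable R : realType.

Definition iota_fun (sigma : R -> R) : R -> R := fun t => sigma (t^-1).

Definition lower_conj (h : R -> R) : R -> R :=
  fun t => inf [set h s + t * s | s in [set s : R | 0 < s]].

Definition upper_conj (g : R -> R) : R -> \bar R :=
  fun s => ereal_sup [set ((g t - s * t)%:E) | t in [set t : R | 0 <= t]].

Definition equiv_pos (f : R -> R) (g : R -> \bar R) : Prop :=
  exists C : R, 1 <= C /\ forall t : R, 0 < t ->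
    ((C^-1)%:E * g t - C%:E <= (f t)%:E)%E /\ ((f t)%:E <= C%:E * g t + C%:E)%E.

Definition P_prop (sigma : R -> R) (gamma : R) : Prop :=
  exists K : R, 1 < K /\
    (limf_esup (fun t : R => ((sigma (K `^ gamma * t)) / sigma t)%:E)
               (pinfty_nbhs R) < K%:E)%E.

(* gamma(sigma) := sup {gamma > 0 | P_{sigma,gamma}}, and 0 if that set is empty *)
Definition gamma_index (sigma : R -> R) : \bar R :=
  ereal_sup ([set 0%E] `|` [set (g%:E) | g in [set g : R | 0 < g /\ P_prop sigma g]]).

End Defs.

(* For a nondecreasing, eventually positive f, (P_{f,g}) holds iff f admits a
   power bound f(l t) <= C l^a f(t) (l >= 1, t large) with a g < 1: given the
   bound, choose K with C K^(a g) < K; conversely, iterate f(K^g t) <= L f(t)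
   with L < K.  So gamma is the reciprocal of the optimal power-bound exponent,
   and it suffices to compare exponents of sigma and phi := (sigma^iota)_*.
   An exponent a for sigma gives the exponent a/(1+a) for phi, by evaluating the
   infimum defining phi(l t) at l^(1/(1+a)) times the point used for phi(t); and
   phi(l t) <= l phi(t) always, so gamma(phi) >= 1.  Conversely an exponent b < 1
   for phi passes to its upper conjugate at the matching scale and, through
   sigma^iota ~ phi^*, to sigma with any exponent above b/(1-b).  Since
   1/(a/(1+a)) = 1/a + 1, the two indices differ by exactly 1. *)

From HB Require Import structures.
From mathcomp Require Import all_boot all_order all_algebra.
From mathcomp Require Import all_classical all_reals all_analysis.
From mathcomp Require Import ring lra.
Import Order.TTheory GRing.Theory Num.Theory.
Import numFieldNormedType.Exports.
Local Open Scope classical_set_scope.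
Local Open Scope ring_scope.
Set Implicit Arguments.
Unset Strict Implicit.
Unset Printing Implicit Defensive.

Section PowerBounds.
Variable R : realType.
Implicit Types (f : R -> R) (a g q C K L T : R).

Definition power_bounded f a := exists C T, 0 < C /\ 0 < T /\
  forall l t, 1 <= l -> T <= t -> f (l * t) <= C * l `^ a * f t.

Lemma powR_gt1 K g : 1 < K -> 0 < g -> 1 < K `^ g.
Proof.
move=> K1 g0; rewrite /powR gt_eqF ?(lt_trans _ K1)//.
by rewrite expR_gt1 mulr_gt0// ln_gt0.
Qed.

Lemma exists_expr_ge q (l : R) : 1 < q -> exists n, l <= q ^+ n.
Proof.
move=> q1; have lnq : 0 < ln q by rewrite ln_gt0.
set n := (Num.truncn (`|l| / ln q)).+1; exists n.
have := truncnS_gt (`|l| / ln q); rewrite ltr_pdivrMr// -/n => hn.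
rewrite -powR_mulrn ?(le_trans ler01 (ltW q1))// /powR gt_eqF ?(lt_trans ltr01 q1)//.
have := expR_ge1Dx (n%:R * ln q); have := ler_norm l; lra.
Qed.

Lemma limf_esup_pinfty_le f M B : (forall t, M < t -> f t <= B) ->
  (limf_esup (fun t => (f t)%:E) (pinfty_nbhs R) <= B%:E)%E.
Proof.
move=> fB; apply: (@le_trans _ _ (ereal_sup [set (f x)%:E | x in [set t | M < t]])).
  by apply: ereal_inf_lbound; exists [set t | M < t] => //; exists M; split; [exact: num_real|].
by apply: ge_ereal_sup => _ [x Mx <-]; rewrite lee_fin fB.
Qed.

Lemma limf_esup_pinfty_lt f K :
  (limf_esup (fun t => (f t)%:E) (pinfty_nbhs R) < K%:E)%E ->
  exists L M, L < K /\ forall t, M < t -> f t <= L.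
Proof.
move=> /ereal_inf_lt[_ [V [M [_ MV]] <-]].
set y := ereal_sup _ => yK.
have fy t : M < t -> ((f t)%:E <= y)%E by move=> Mt; apply: ereal_sup_ubound; exists t => //; exact: MV.
case: y fy yK => [r| |] fy yK //.
- by exists r, M; split => [|t /fy]; rewrite -?lte_fin -?lee_fin.
- by have := fy (M + 1); rewrite leeNy_eq ltrDl ltr01 => /(_ isT).
Qed.

Lemma P_prop_of_power_bounded f a g : 0 < g -> a * g < 1 ->
  (\forall t \near +oo, 0 < f t) -> power_bounded f a -> P_prop f g.
Proof.
move=> g0 ag1 [M [_ fpos]] [C [T [C0 [T0 fC]]]].
pose e := 1 - a * g; have e0 : 0 < e by rewrite subr_gt0.
(* K^e = C + 2 makes C K^(a g) = C K / (C + 2) < K *)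
pose K := (C + 2) `^ e^-1.
have K1 : 1 < K by apply: powR_gt1; [lra | rewrite invr_gt0].
have KE : K = K `^ (g * a) * (C + 2).
  have Ke : K `^ e = C + 2 by rewrite -powRrM mulVf ?gt_eqF// powRr1//; lra.
  rewrite -Ke -powRD; last by apply/implyP => _; rewrite gt_eqF//; lra.
  by rewrite /e mulrC addrC subrK powRr1//; lra.
exists K; split => //.
apply: (@le_lt_trans _ _ (C * K `^ (g * a))%:E); last first.
  by rewrite lte_fin {2}KE mulrC ltr_pM2l ?powR_gt0//; lra.
apply: (@limf_esup_pinfty_le _ (Num.max M T)) => t; rewrite gt_max => /andP[Mt Tt].
rewrite ler_pdivrMr ?fpos// powRrM; apply: fC; last exact: ltW.
by rewrite -(powRr0 K) ler_powR// ?mulr_ge0 ?ltW//; lra.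
Qed.

Lemma power_bounded_of_step f q L T :
  (forall t, 0 <= t -> 0 <= f t) -> (forall s t, 0 <= s -> s <= t -> f s <= f t) ->
  1 < q -> 1 <= L -> 0 < T -> (forall t, T <= t -> f (q * t) <= L * f t) ->
  power_bounded f (ln L / ln q).
Proof.
move=> f0 fmon q1 L1 T0 fq.
have lnq : 0 < ln q by rewrite ln_gt0.
have qa : q `^ (ln L / ln q) = L.
  by rewrite /powR gt_eqF ?(lt_trans _ q1)// divfK ?gt_eqF// lnK// posrE; lra.
set a := ln L / ln q in qa *.
have a0 : 0 <= a by apply: divr_ge0; [exact: ln_ge0 | exact: ltW].
exists L, T; split; first lra; split=> // l t l1 Tt.
have [n] := exists_expr_ge l q1.
elim: n l t l1 Tt => [|n IH] l t l1 Tt lqn.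
  have -> : l = 1 by apply/eqP; rewrite eq_le l1 -(expr0 q) lqn.
  by rewrite mul1r powR1 mulr1 ler_peMl ?f0//; lra.
have [lq|ql] := leP l q.
  apply: le_trans (_ : f (q * t) <= _).
    by apply: fmon; [rewrite mulr_ge0//; lra | rewrite ler_wpM2r//; lra].
  apply: le_trans (fq _ Tt) _; rewrite ler_wpM2r ?f0 ?ler_peMr//; try lra.
  by rewrite -(powRr0 l) ler_powR.
have lqa : (l / q) `^ a * L = l `^ a.
  by rewrite -qa -powRM ?divfK ?gt_eqF ?divr_ge0//; lra.
have -> : l * t = (l / q) * (q * t) by rewrite mulrA divfK ?gt_eqF//; lra.
apply: le_trans (IH _ _ _ _ _) _.
- by rewrite ler_pdivlMr ?mul1r ?ltW//; lra.
- by rewrite -[T]mul1r ler_pM//; lra.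
- by rewrite ler_pdivrMr -?exprSr//; lra.
apply: le_trans (_ : L * (l / q) `^ a * (L * f t) <= _).
  by rewrite ler_wpM2l ?fq// mulr_ge0 ?powR_ge0//; lra.
by rewrite mulrA -(mulrA L) lqa.
Qed.

Lemma power_bounded_of_P_prop f g : 0 < g ->
  (forall t, 0 <= t -> 0 <= f t) -> (forall s t, 0 <= s -> s <= t -> f s <= f t) ->
  (\forall t \near +oo, 0 < f t) -> P_prop f g ->
  exists a, 0 <= a /\ a * g < 1 /\ power_bounded f a.
Proof.
move=> g0 f0 fmon [M [_ fpos]] [K [K1 /limf_esup_pinfty_lt[L0 [M1 [L0K fL0]]]]].
pose L := Num.max L0 1; pose q := K `^ g.
have L1 : 1 <= L by rewrite le_max lexx orbT.
have LK : L < K by rewrite gt_max L0K K1.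
have q1 : 1 < q by apply: powR_gt1.
have lnK : 0 < ln K by rewrite ln_gt0.
pose T := 1 + `|M| + `|M1|.
have [MT M1T T0] : [/\ M < T, M1 < T & 0 < T].
  have := ler_norm M; have := ler_norm M1; have := normr_ge0 M; have := normr_ge0 M1.
  by rewrite /T => *; split; lra.
have fqL t : T <= t -> f (q * t) <= L * f t.
  move=> Tt; rewrite -ler_pdivrMr ?fpos//; last lra.
  by apply: le_trans (fL0 _ _) _; [lra | rewrite le_max lexx].
have lnq : 0 < ln q by rewrite ln_gt0.
exists (ln L / ln q); split; first by apply: divr_ge0; [exact: ln_ge0 | exact: ltW].
split; last exact: power_bounded_of_step f0 fmon q1 L1 T0 fqL.
have -> : ln L / ln q * g = ln L / ln K by rewrite /q ln_powR; field; rewrite !gt_eqF.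
by rewrite ltr_pdivrMr// mul1r ltr_ln// posrE; lra.
Qed.

Lemma power_bound_absorb f C T b b' : 0 < C -> b < b' ->
  (forall t, T <= t -> 0 <= f t) ->
  (forall l t, 1 <= l -> T <= t -> f (l * t) <= C * l `^ b * f t) ->
  exists2 L0, 1 <= L0 & forall l t, L0 <= l -> T <= t -> f (l * t) <= l `^ b' * f t.
Proof.
move=> C0 bb' f0 fC; pose L0 := Num.max 1 (C `^ (b' - b)^-1).
exists L0 => [|l t L0l Tt]; first by rewrite le_max lexx.
have l1 : 1 <= l by apply: le_trans L0l; rewrite le_max lexx.
apply: le_trans (fC _ _ l1 Tt) _; rewrite ler_wpM2r ?f0//.
have -> : l `^ b' = l `^ (b' - b) * l `^ b.
  by rewrite -powRD ?subrK//; apply/implyP => _; rewrite gt_eqF//; lra.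
rewrite ler_wpM2r ?powR_ge0//.
have -> : C = (C `^ (b' - b)^-1) `^ (b' - b).
  by rewrite -powRrM mulVf ?gt_eqF ?subr_gt0// powRr1// ltW.
apply: ge0_ler_powR; rewrite ?nnegrE ?powR_ge0 ?subr_ge0 ?(ltW bb')//; first lra.
by apply: le_trans L0l; rewrite le_max lexx orbT.
Qed.

Lemma power_bounded_of_large_scales f a C T l0 :
  (forall t, 0 <= t -> 0 <= f t) -> (forall s t, 0 <= s -> s <= t -> f s <= f t) ->
  0 <= a -> 0 < C -> 0 < T -> 1 <= l0 ->
  (forall l t, l0 <= l -> T <= t -> f (l * t) <= C * l `^ a * f t) ->
  power_bounded f a.
Proof.
move=> f0 fmon a0 C0 T0 l01 fC.
exists (C * l0 `^ a), T; split; first by rewrite mulr_gt0 ?powR_gt0//; lra.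
split=> // l t l1 Tt; pose m := Num.max l l0.
have [lm l0m] : l <= m /\ l0 <= m by rewrite !le_max !lexx orbT.
apply: le_trans (_ : f (m * t) <= _).
  by apply: fmon; [rewrite mulr_ge0//; lra | rewrite ler_wpM2r//; lra].
apply: le_trans (fC _ _ l0m Tt) _.
rewrite ler_wpM2r ?f0 -?mulrA ?ler_wpM2l -?powRM//; try lra.
apply: ge0_ler_powR; rewrite ?nnegrE ?mulr_ge0//; try lra.
by rewrite ge_max ler_peMl ?ler_peMr//; lra.
Qed.

Lemma exists_powR_scale b L0 lam : b < 1 -> 1 <= L0 -> L0 `^ (1 - b) <= lam ->
  exists l, [/\ L0 <= l, lam * l `^ b = l & l `^ b = lam `^ (b / (1 - b))].
Proof.
move=> b1 L01 lamL; have e0 : 0 < 1 - b by rewrite subr_gt0.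
have lam1 : 1 <= lam.
  by apply: le_trans lamL; rewrite -[X in X <= _](powRr0 L0) ler_powR//; lra.
pose l := lam `^ (1 - b)^-1; have l0 : 0 < l by apply: powR_gt0; lra.
have laml : lam = l `^ (1 - b) by rewrite /l -powRrM mulVf ?gt_eqF// powRr1//; lra.
exists l; split; last by rewrite /l -powRrM mulrC.
- have -> : L0 = (L0 `^ (1 - b)) `^ (1 - b)^-1.
    by rewrite -powRrM mulfV ?gt_eqF// powRr1//; lra.
  by apply: ge0_ler_powR; rewrite ?nnegrE ?invr_ge0 ?powR_ge0//; lra.
- by rewrite {1}laml -powRD ?subrK ?powRr1 ?(gt_eqF l0) ?implybT// ltW.
Qed.

End PowerBounds.

Section LowerConjugate.
Variables (R : realType) (sigma : R -> R).
Hypothesis sigma_ge0 : forall t, 0 <= t -> 0 <= sigma t.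

Local Notation phi := (lower_conj (iota_fun sigma)).

Lemma sigma_inv_ge0 s : 0 < s -> 0 <= sigma s^-1.
Proof. by move=> s0; rewrite sigma_ge0// invr_ge0 ltW. Qed.

Lemma lower_conj_le t s : 0 <= t -> 0 < s -> phi t <= sigma s^-1 + t * s.
Proof.
move=> t0 s0; apply: ge_inf; last by exists s.
by exists 0 => _ [r r0 <-]; rewrite addr_ge0 ?sigma_inv_ge0 ?mulr_ge0// ltW.
Qed.

Lemma le_lower_conj t m : 0 <= t ->
  (forall s, 0 < s -> m <= sigma s^-1 + t * s) -> m <= phi t.
Proof.
move=> t0 mle; apply: lb_le_inf; first by exists (iota_fun sigma 1 + t * 1), 1 => //=.
by move=> _ [s s0 <-]; exact: mle.
Qed.

Lemma lower_conj_ge0 t : 0 <= t -> 0 <= phi t.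
Proof.
by move=> t0; apply: le_lower_conj => // s s0; rewrite addr_ge0 ?sigma_inv_ge0 ?mulr_ge0// ltW.
Qed.

Lemma lower_conj_le_homo s t : 0 <= s -> s <= t -> phi s <= phi t.
Proof.
move=> s0 st; apply: le_lower_conj => [|r r0]; first exact: le_trans st.
by apply: le_trans (lower_conj_le s0 r0) _; rewrite lerD2l ler_pM2r.
Qed.

Lemma power_bounded1_lower_conj : power_bounded phi 1.
Proof.
exists 1, 1; split => //; split => // l t l1 t1.
have [t0 l0] : 0 <= t /\ 0 < l by split; lra.
rewrite mul1r (powRr1 (ltW l0)) -ler_pdivrMl//.
apply: le_lower_conj => // s s0.
rewrite ler_pdivrMl// mulrDr mulrA.
apply: le_trans (lower_conj_le (mulr_ge0 (ltW l0) t0) s0) _.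
by rewrite lerD2r ler_peMl ?sigma_inv_ge0.
Qed.

Lemma lower_conj_eventually_gt0 :
  (\forall t \near +oo, 1 <= sigma t) -> \forall t \near +oo, 0 < phi t.
Proof.
move=> [M [_ sM]]; exists (Num.max M 1); split; first exact: num_real.
move=> t; rewrite gt_max => /andP[Mt t1].
apply: lt_le_trans ltr01 _; apply: le_lower_conj => [|s s0]; first lra.
have ts : 0 <= t * s by rewrite mulr_ge0; lra.
have [Ms|sM'] := ltP M s^-1; first by have := sM _ Ms; lra.
have : 1 <= t * s by rewrite -ler_pdivrMr// div1r; lra.
by have := sigma_inv_ge0 s0; lra.
Qed.

Lemma lower_conj_scale_le a C T l t s : 0 <= a -> 0 < C -> 0 < T ->
  (forall l t, 1 <= l -> T <= t -> sigma (l * t) <= C * l `^ a * sigma t) ->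
  1 <= l -> T * C * sigma T <= t -> 0 < t -> 0 < s ->
  phi (l * t) <= (C + 2) * l `^ (a / (1 + a)) * (sigma s^-1 + t * s).
Proof.
move=> a0 C0 T0 sC l1 tT t0 s0.
set b := a / (1 + a); set p := l `^ (1 + a)^-1.
have l0 : 0 < l by lra.
have p1 : 1 <= p by rewrite -[X in X <= _](powRr0 l) ler_powR// invr_ge0; lra.
have pa : p `^ a = l `^ b by rewrite -powRrM mulrC.
have lp : l / p = l `^ b.
  have -> : b = 1 - (1 + a)^-1 by rewrite /b; field; rewrite gt_eqF//; lra.
  by rewrite powRB ?(gt_eqF l0) ?implybT// powRr1// ltW.
have lt0 : 0 <= l * t by rewrite mulr_ge0//; lra.
(* test the infimum at (p u)^-1: the bound for sigma turns sigma(p u) into C l^b sigma(u) *)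
have key u : T <= u -> phi (l * t) <= l `^ b * (C * sigma u + t / u).
  move=> Tu; have pu : 0 < (p * u)^-1 by rewrite invr_gt0 mulr_gt0; lra.
  apply: le_trans (lower_conj_le lt0 pu) _.
  rewrite invrK mulrDr; apply: lerD.
    by apply: le_trans (sC _ _ p1 Tu) _; rewrite pa mulrCA mulrA.
  by have -> : l * t * (p * u)^-1 = l `^ b * (t / u) by rewrite -lp; field; rewrite !gt_eqF//; lra.
have lb0 : 0 <= l `^ b := powR_ge0 _ _.
have sigs := sigma_inv_ge0 s0.
have ts : 0 <= t * s by rewrite mulr_ge0; lra.
rewrite [(C + 2) * _]mulrC -mulrA.
have [Ts|sT] := leP T s^-1.
  apply: le_trans (key _ Ts) _; rewrite invrK ler_wpM2l//; nra.
apply: le_trans (key _ (lexx T)) _; rewrite ler_wpM2l//.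
have CT : C * sigma T <= t / T by rewrite ler_pdivlMr// mulrC mulrA.
have tTs : t / T <= t * s.
  by rewrite ler_pM2l// -(invrK s) lef_pV2 ?posrE ?invr_gt0// ltW.
have : 0 <= C * (sigma s^-1 + t * s) by rewrite mulr_ge0; lra.
lra.
Qed.

Lemma power_bounded_lower_conj a : 0 <= a ->
  power_bounded sigma a -> power_bounded phi (a / (1 + a)).
Proof.
move=> a0 [C [T [C0 [T0 sC]]]].
have CsT : 0 <= T * C * sigma T by rewrite !mulr_ge0 ?sigma_ge0 ?ltW.
exists (C + 2), (T * C * sigma T + 1); split; first lra.
split=> [|l t l1 tT]; first lra.
have t0 : 0 < t by lra.
rewrite -ler_pdivrMl ?mulr_gt0 ?powR_gt0; try lra.
apply: le_lower_conj => [|s s0]; first lra.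
rewrite ler_pdivrMl ?mulr_gt0 ?powR_gt0; try lra.
by apply: (lower_conj_scale_le (T := T)) => //; lra.
Qed.

Lemma upper_conj_lower_conj_le b L0 T l lam s : 0 < T -> 1 <= L0 ->
  (forall l t, L0 <= l -> T <= t -> phi (l * t) <= l `^ b * phi t) ->
  L0 <= l -> 0 < lam -> lam * l `^ b = l -> 0 < s ->
  (upper_conj phi (s / lam) <= (l `^ b * (sigma s^-1 + phi T))%:E)%E.
Proof.
move=> T0 L01 phiL Ll lam0 lamE s0.
have l0 : 0 < l by lra.
have lb0 : 0 < l `^ b by apply: powR_gt0.
have sigs := sigma_inv_ge0 s0.
have phiT := lower_conj_ge0 (ltW T0).
apply: ge_ereal_sup => _ [t t0 <-]; rewrite lee_fin.
have [lTt|tlT] := leP (l * T) t.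
  set tau := t / l.
  have Ttau : T <= tau by rewrite /tau ler_pdivlMr// mulrC.
  have -> : t = l * tau by rewrite /tau mulrC divfK ?gt_eqF.
  have -> : s / lam * (l * tau) = l `^ b * (tau * s) by rewrite -{1}lamE; field; rewrite gt_eqF.
  have := phiL _ _ Ll Ttau.
  have := ler_wpM2l (ltW lb0) (lower_conj_le (le_trans (ltW T0) Ttau) s0).
  have := mulr_ge0 (ltW lb0) phiT.
  rewrite mulrDr; lra.
have := lower_conj_le_homo t0 (ltW tlT).
have := phiL _ _ Ll (lexx T).
have : 0 <= s / lam * t by rewrite mulr_ge0// divr_ge0// ltW.
have := mulr_ge0 (ltW lb0) sigs.
rewrite mulrDr; lra.
Qed.

End LowerConjugate.

Section Transfer.
Variables (R : realType) (sigma : R -> R).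
Hypothesis sigma_ge0 : forall t, 0 <= t -> 0 <= sigma t.
Hypothesis sigma_mon : forall s t, 0 <= s -> s <= t -> sigma s <= sigma t.
Hypothesis sigma_ge1 : \forall t \near +oo, 1 <= sigma t.

Local Notation phi := (lower_conj (iota_fun sigma)).

Let sigma_gt0 : \forall t \near +oo, 0 < sigma t.
Proof. by apply: filterS sigma_ge1 => t; apply: lt_le_trans. Qed.

Let phi_gt0 : \forall t \near +oo, 0 < phi t.
Proof. exact: lower_conj_eventually_gt0. Qed.

Lemma power_bounded_of_lower_conj b b' :
  equiv_pos (iota_fun sigma) (upper_conj phi) ->
  b < b' -> 0 <= b' -> b' < 1 ->
  power_bounded phi b -> power_bounded sigma (b' / (1 - b')).
Proof.
move=> [D [D1 sD]] bb' b'0 b'1 [C [T [C0 [T0 phiC]]]].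
have [M [_ sM]] := sigma_ge1.
have phiT := lower_conj_ge0 sigma_ge0 (ltW T0).
have phi_ge0 t : T <= t -> 0 <= phi t.
  by move=> Tt; apply: lower_conj_ge0 => //; apply: le_trans Tt; exact: ltW.
have [L0 L01 phiL] := power_bound_absorb C0 bb' phi_ge0 phiC.
have e0 : 0 < 1 - b' by rewrite subr_gt0.
set a := b' / (1 - b').
have a0 : 0 <= a by rewrite divr_ge0// ltW.
have L0e : 1 <= L0 `^ (1 - b') by rewrite -[X in X <= _](powRr0 L0) ler_powR//; lra.
apply: (@power_bounded_of_large_scales _ _ a (D * (2 + phi T)) (`|M| + 1) _ sigma_ge0 sigma_mon a0 _ _ L0e).
- by rewrite mulr_gt0; lra.
- by have := normr_ge0 M; lra.
move=> lam u lamL Mu.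
have [u0 su] : 0 < u /\ 1 <= sigma u.
  by have := ler_norm M; have := normr_ge0 M; split; [lra | apply: sM; lra].
have lam0 : 0 < lam by lra.
have [l [Ll lamE lba]] := exists_powR_scale b'1 L01 lamL.
have ui0 : 0 < u^-1 by rewrite invr_gt0.
have psi := upper_conj_lower_conj_le sigma_ge0 T0 L01 phiL Ll lam0 lamE ui0.
rewrite invrK lba in psi.
have [_ sigma_psi] := sD _ (divr_gt0 ui0 lam0).
rewrite /iota_fun invf_div invrK in sigma_psi.
have X1 : 1 <= lam `^ a by rewrite -(powRr0 lam) ler_powR//; lra.
have E : sigma (lam * u) <= D * (lam `^ a * (sigma u + phi T)) + D.
  rewrite -lee_fin EFinD EFinM; apply: le_trans sigma_psi _.
  by rewrite leeD2r// lee_wpmul2l// lee_fin; lra.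
apply: le_trans E _; rewrite -[X in _ + X]mulr1 -mulrDr -!mulrA ler_wpM2l; try lra.
have : 1 <= lam `^ a * sigma u by rewrite -[1]mulr1 ler_pM//; lra.
have : 0 <= lam `^ a * phi T * (sigma u - 1) by rewrite !mulr_ge0//; lra.
nra.
Qed.

Lemma P_prop_lower_conj_succ g : 0 < g -> P_prop sigma g -> P_prop phi (g + 1).
Proof.
move=> g0 /(power_bounded_of_P_prop g0 sigma_ge0 sigma_mon sigma_gt0)[a [a0 [ag sa]]].
apply: P_prop_of_power_bounded phi_gt0 (power_bounded_lower_conj sigma_ge0 a0 sa); first lra.
by rewrite mulrAC ltr_pdivrMr ?mul1r; lra.
Qed.

Lemma P_prop_lower_conj_lt1 g : 0 < g -> g < 1 -> P_prop phi g.
Proof.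
move=> g0 g1; apply: P_prop_of_power_bounded phi_gt0 (power_bounded1_lower_conj sigma_ge0) => //.
by rewrite mul1r.
Qed.

Lemma P_prop_of_lower_conj d : 1 < d ->
  equiv_pos (iota_fun sigma) (upper_conj phi) -> P_prop phi d -> P_prop sigma (d - 1).
Proof.
move=> d1 equiv Pd; have d0 : 0 < d by lra.
have [b [b0 [bd pb]]] := power_bounded_of_P_prop d0 (lower_conj_ge0 sigma_ge0)
  (lower_conj_le_homo sigma_ge0) phi_gt0 Pd.
have [b' [bb' b'0 b'1 b'd]] : exists b', [/\ b < b', 0 <= b', b' < 1 & b' * d < 1].
  have bd' : b < d^-1 by rewrite -[d^-1]mul1r ltr_pdivlMr.
  have d'1 : d^-1 < 1 by rewrite invf_lt1.
  exists ((b + d^-1) / 2); split; try lra.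
  by rewrite -ltr_pdivlMr// mul1r; lra.
apply: P_prop_of_power_bounded sigma_gt0 (power_bounded_of_lower_conj equiv bb' b'0 b'1 pb).
  lra.
by rewrite mulrAC ltr_pdivrMr ?mul1r; lra.
Qed.

End Transfer.

Section GammaIndex.
Variable R : realType.
Implicit Types f h : R -> R.

Lemma gamma_index_ge0 f : (0 <= gamma_index f)%E.
Proof. by apply: ereal_sup_ubound; left. Qed.

Lemma gamma_index_ge f g : 0 < g -> P_prop f g -> (g%:E <= gamma_index f)%E.
Proof. by move=> g0 Pg; apply: ereal_sup_ubound; right; exists g. Qed.

Lemma gamma_index_succ f h :
  (forall g, 0 < g -> P_prop f g -> P_prop h (g + 1)) ->
  (forall g, 0 < g -> g < 1 -> P_prop h g) ->
  (forall g, 1 < g -> P_prop h g -> P_prop f (g - 1)) ->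
  (gamma_index f + 1 = gamma_index h)%E.
Proof.
move=> fh h01 hf; apply/eqP; rewrite eq_le; apply/andP; split.
- rewrite -leeBrDr//; apply: ge_ereal_sup => _ [->|[g [g0 Pg] <-]].
  + rewrite leeBrDr// add0e; apply/lee_mul01Pr => // r /andP[r0 r1].
    by rewrite mule1; apply: gamma_index_ge r0 (h01 _ r0 r1).
  + by rewrite leeBrDr// -EFinD; apply: gamma_index_ge (fh _ g0 Pg); lra.
- apply: ge_ereal_sup => _ [->|[g [g0 Pg] <-]].
  + by rewrite adde_ge0 ?gamma_index_ge0.
  + have [g1|g1] := leP g 1.
      by apply: (@le_trans _ _ 1%:E); rewrite ?lee_fin ?leeDr ?gamma_index_ge0.
    by rewrite -[g](subrK 1) EFinD leeD2r//; apply: gamma_index_ge (hf _ g1 Pg); lra.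
Qed.

End GammaIndex.

Unset Implicit Arguments.

Theorem proposition2p22 (R : realType) (sigma : R -> R) :
  (forall t : R, 0 <= t -> 0 <= sigma t) ->
  (forall s t : R, 0 <= s -> s <= t -> sigma s <= sigma t) ->
  sigma x @[x --> +oo] --> +oo ->
  equiv_pos (iota_fun sigma) (upper_conj (lower_conj (iota_fun sigma))) ->
  (gamma_index sigma + 1%E)%E = gamma_index (lower_conj (iota_fun sigma)).
Proof.
move=> sigma_ge0 sigma_mon /cvgryPge/(_ 1) sigma_ge1 equiv.
apply: gamma_index_succ => [g|g|d d1].
- exact: P_prop_lower_conj_succ.
- exact: P_prop_lower_conj_lt1.
- exact: P_prop_of_lower_conj.
Qed.
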